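(* Let $\Phi$ be a CNF formula in which every clause consists of exactly two (possibly equal) literals, and let $k$ be an integer. For each variable $x$ let $n(x)$ be the number of occurrences of $x$ in $\Phi$ (a clause $(l\vee l)$ with $l\in\{x,\neg x\}$ counts as two), numbered $1,\dots,n(x)$ arbitrarily. Build a graph $G$ with vertices $v(x,i)$ and $v(\neg x,i)$ for every variable $x$ and $1\le i\le n(x)$; for each $x$, join every vertex of $V(x)=\{v(x,i)\}_i$ to every vertex of $V(\neg x)=\{v(\neg x,j)\}_j$; and for each clause $C=(l_x\vee l_y)$, where $l_x$ is the $i$-th occurrence of variable $x$ and $l_y$ the $j$-th occurrence of variable $y$ (with $(x,i)\neq(y,j)$), add the edge $v(l_x,i)v(l_y,j)$. Then $G$ has a perfect matching, and there is a set of at most $k$ clauses of $\Phi$ whose deletion makes $\Phi$ satisfiable iff $G$ has a vertex cover of size at most $\mu(G)+k$.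
   Context: $\mu(G)$ denotes the size of a maximum matching of $G$. Here $v(l,i)$ for a literal $l\in\{x,\neg x\}$ denotes the vertex $v(x,i)$ or $v(\neg x,i)$ respectively. *)

From HB Require Import structures.
From mathcomp Require Import all_boot.
Set Implicit Arguments. Unset Strict Implicit. Unset Printing Implicit Defensive.

Section Graph.
Variable V : finType.
Variable adj : rel V.

Definition is_matching (M : {set {set V}}) : bool :=
  [forall e in M, exists u, exists v, [&& adj u v, u != v & e == [set u; v]]] &&
  [forall e1 in M, forall e2 in M, (e1 != e2) ==> [disjoint e1 & e2]].

Definition matching_number : nat :=
  \max_(M : {set {set V}} | is_matching M) #|M|.

Definition is_perfect_matching (M : {set {set V}}) : bool :=
  is_matching M && (cover M == [set: V]).

Definition is_vertex_cover (C : {set V}) : bool :=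
  [forall u, forall v, adj u v ==> (u \in C) || (v \in C)].
End Graph.

(* A literal over variables 'I_nv: (x, true) is x, (x, false) is ~x. *)
Definition lit (nv : nat) := ('I_nv * bool)%type.

(* An occurrence of a variable: (clause index, position) where position
   false = first literal, true = second literal. *)
Definition occ (m : nat) := ('I_m * bool)%type.

Definition occ_lit nv m (Phi : 'I_m -> lit nv * lit nv) (o : occ m) : lit nv :=
  if o.2 then (Phi o.1).2 else (Phi o.1).1.

(* Vertices of G: v(l, i) with l in {x, ~x} and i the i-th occurrence of x is
   encoded as (o, s) where o is that occurrence (of variable x) and s the
   polarity of l (true: v(x,i), false: v(~x,i)). *)
Definition red_vertex (m : nat) := (occ m * bool)%type.

Definition red_adj nv m (Phi : 'I_m -> lit nv * lit nv) : rel (red_vertex m) :=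
  fun u w =>
    (* V(x) completely joined to V(~x) *)
    (((occ_lit Phi u.1).1 == (occ_lit Phi w.1).1) && (u.2 != w.2))
    ||
    (* clause edges v(l_x, i) v(l_y, j) for the two occurrences of a clause *)
    [&& u.1.1 == w.1.1, u.1.2 != w.1.2,
        u.2 == (occ_lit Phi u.1).2 & w.2 == (occ_lit Phi w.1).2].

Definition lit_true nv (a : 'I_nv -> bool) (l : lit nv) : bool := a l.1 == l.2.

Definition sat_without nv m (Phi : 'I_m -> lit nv * lit nv) (D : {set 'I_m}) : Prop :=
  exists a : 'I_nv -> bool,
    forall c : 'I_m, c \notin D -> lit_true a (Phi c).1 || lit_true a (Phi c).2.

From HB Require Import structures.
From mathcomp Require Import all_boot.
Set Implicit Arguments. Unset Strict Implicit. Unset Printing Implicit Defensive.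

(* Write O for the set of occurrences (two per clause); G has the
   vertices (o, s) for o in O and a polarity s.
   1. General graph facts: the edges of a matching are disjoint 2-sets, so a
      matching M covers 2|M| vertices; hence a perfect matching realises
      mu(G).
   2. The pairs {(o,true), (o,false)} form a perfect matching of G, so
      mu(G) = |O|.
   3. An assignment a gives the cover-like set A(a) of the |O| vertices
      (o, a(var o)), i.e. of the true literal per occurrence.  It covers every
      polarity edge, and the clause edge of c iff c is satisfied by a.
   4. Forward: A(a) plus one endpoint per deleted clause is a cover of size
      at most |O| + |D|.  Backward: from a cover C read off the assignment
      "x is true iff all positive vertices of x are in C"; then A(a) is
      contained in C and every clause falsified by a contributes a further
      vertex of C outside A(a), so |C| >= |O| + #falsified clauses. *)

Section Matchings.
Variables (V : finType) (adj : rel V).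

Lemma matching_trivIset (M : {set {set V}}) : is_matching adj M -> trivIset M.
Proof.
case/andP=> _ /forallP disjM; apply/trivIsetP => e1 e2 e1M e2M ne.
by move: (disjM e1); rewrite e1M => /forallP/(_ e2); rewrite e2M ne.
Qed.

Lemma matching_edge_card (M : {set {set V}}) e :
  is_matching adj M -> e \in M -> #|e| = 2.
Proof.
case/andP=> /forallP edgeM _ eM; move: (edgeM e); rewrite eM /=.
by case/existsP=> u /existsP[v /and3P[_ uv /eqP ->]]; rewrite cards2 uv.
Qed.

Lemma card_cover_matching (M : {set {set V}}) :
  is_matching adj M -> #|cover M| = #|M| * 2.
Proof.
move=> matM; rewrite -(eqP (matching_trivIset matM)) -sum_nat_const.
by apply: eq_bigr => e eM; rewrite (matching_edge_card matM eM).
Qed.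

Lemma perfect_matching_number (M : {set {set V}}) :
  is_perfect_matching adj M -> matching_number adj = #|M|.
Proof.
case/andP=> matM /eqP coverM; apply/eqP; rewrite eqn_leq; apply/andP; split.
- apply/bigmax_leqP => N matN; rewrite -(leq_pmul2r (isT : 0 < 2)).
  by rewrite -!card_cover_matching // coverM subset_leq_card ?subsetT.
- exact: (@leq_bigmax_cond _ (is_matching adj) (fun N => #|N|) _ matM).
Qed.

End Matchings.

Section Reduction.
Variables (nv m : nat) (Phi : 'I_m -> lit nv * lit nv).

Local Notation G := (red_adj Phi).

Definition occ_var (o : occ m) : 'I_nv := (occ_lit Phi o).1.

Definition lit_vertex (o : occ m) : red_vertex m := (o, (occ_lit Phi o).2).

Lemma polarity_edge (o o' : occ m) :
  occ_var o = occ_var o' -> G (o, true) (o', false).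
Proof. by rewrite /red_adj /occ_var /= => ->; rewrite eqxx. Qed.

Lemma clause_edge (c : 'I_m) : G (lit_vertex (c, false)) (lit_vertex (c, true)).
Proof. by rewrite /red_adj /lit_vertex /= !eqxx orbT. Qed.

Lemma red_adjP (u w : red_vertex m) :
  G u w ->
  (occ_var u.1 = occ_var w.1 /\ u.2 != w.2) \/
  (exists c, u = lit_vertex (c, ~~ w.1.2) /\ w = lit_vertex (c, w.1.2)).
Proof.
case/orP=> [/andP[/eqP same ne] | /and4P[/eqP ec ep /eqP eu /eqP ew]]; first by left.
right; exists w.1.1; case: u w ec ep eu ew => [[cu pu] su] [[cw pw] sw] /= -> ep -> ->.
by case: pu pw ep => [] [].
Qed.

Definition occ_pair (o : occ m) : {set red_vertex m} := [set (o, true); (o, false)].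

Definition pair_matching : {set {set red_vertex m}} := [set occ_pair o | o : occ m].

Lemma pair_matching_perfect : is_perfect_matching G pair_matching.
Proof.
apply/andP; split; [apply/andP; split|].
- apply/forallP => e; apply/implyP => /imsetP[o _ ->].
  apply/existsP; exists (o, true); apply/existsP; exists (o, false).
  by rewrite polarity_edge // xpair_eqE /occ_pair !eqxx.
- apply/forallP => e1; apply/implyP => /imsetP[o1 _ ->].
  apply/forallP => e2; apply/implyP => /imsetP[o2 _ ->].
  apply/implyP => ne; apply/pred0P => v; apply/negbTE/negP; rewrite /= !inE.
  by case/andP=> /orP[] /eqP -> /orP[] /eqP[] eo; rewrite eo eqxx in ne.
- apply/eqP/setP => v; rewrite inE; apply/bigcupP; exists (occ_pair v.1).
    exact: imset_f.
  by case: v => o [] ; rewrite !inE eqxx ?orbT.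
Qed.

Lemma card_pair_matching : #|pair_matching| = #|{: occ m}|.
Proof.
rewrite card_imset // => o1 o2 eq12.
have : (o1, true) \in occ_pair o2 by rewrite -eq12 !inE eqxx.
by rewrite !inE => /orP[] /eqP[].
Qed.

Lemma red_matching_number : matching_number G = #|{: occ m}|.
Proof.
by rewrite (perfect_matching_number pair_matching_perfect) card_pair_matching.
Qed.

Definition assignment_cover (a : 'I_nv -> bool) : {set red_vertex m} :=
  [set (o, a (occ_var o)) | o : occ m].

Lemma mem_assignment_cover a v :
  (v \in assignment_cover a) = (v.2 == a (occ_var v.1)).
Proof.
apply/imsetP/eqP => [[o _ ->] // | ev]; exists v.1 => //.
by case: v ev => o s /= ->.
Qed.

Lemma lit_vertex_assignment_cover a o :
  (lit_vertex o \in assignment_cover a) = lit_true a (occ_lit Phi o).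
Proof. by rewrite mem_assignment_cover eq_sym. Qed.

Lemma card_assignment_cover a : #|assignment_cover a| = #|{: occ m}|.
Proof. by rewrite card_imset // => o1 o2 [->]. Qed.

Lemma clause_sat_cover a c :
  lit_true a (Phi c).1 || lit_true a (Phi c).2 =
  (lit_vertex (c, false) \in assignment_cover a) ||
  (lit_vertex (c, true) \in assignment_cover a).
Proof. by rewrite !lit_vertex_assignment_cover. Qed.

Lemma sat_vertex_cover (D : {set 'I_m}) :
  sat_without Phi D ->
  exists C, is_vertex_cover G C /\ #|C| <= #|{: occ m}| + #|D|.
Proof.
case=> a satD; pose C := assignment_cover a :|: [set lit_vertex (c, false) | c in D].
exists C; split.
- apply/forallP => u; apply/forallP => w; apply/implyP.
  case/red_adjP=> [[same ne] | [c [-> ->]]].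
    rewrite !in_setU !mem_assignment_cover same.
    by case: u w ne same => [? []] [? []] //=; case: (a _); rewrite ?orbT.
  have covered : (lit_vertex (c, false) \in C) || (lit_vertex (c, true) \in C).
    case: (boolP (c \in D)) => cD.
      by rewrite in_setU (imset_f (fun c' => lit_vertex (c', false)) cD) orbT.
    by move: (satD c cD); rewrite clause_sat_cover !in_setU => /orP[] ->; rewrite ?orbT.
  by case: (w.1.2) covered => //=; rewrite orbC.
- rewrite cardsU card_assignment_cover; apply: leq_trans (leq_subr _ _) _.
  by rewrite leq_add2l leq_imset_card.
Qed.

Definition falsified (a : 'I_nv -> bool) : {set 'I_m} :=
  [set c | ~~ (lit_true a (Phi c).1 || lit_true a (Phi c).2)].

Definition cover_assignment (C : {set red_vertex m}) (x : 'I_nv) : bool :=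
  [forall o : occ m, (occ_var o == x) ==> ((o, true) \in C)].

(* The assignment read off a vertex cover C has A(a) inside C: if a
   positive vertex of x is missing, C must contain all of V(~x). *)
Lemma assignment_cover_sub (C : {set red_vertex m}) :
  is_vertex_cover G C -> assignment_cover (cover_assignment C) \subset C.
Proof.
move=> /forallP coverC; apply/subsetP => _ /imsetP[o _ ->].
case ax: (cover_assignment C _); first by move/forallP: ax => /(_ o); rewrite eqxx.
move/negbT/forallPn: ax => [o0]; rewrite negb_imply => /andP[/eqP var0 notin0].
move/forallP: (coverC (o0, true)) => /(_ (o, false)).
by rewrite polarity_edge // (negPf notin0).
Qed.

(* Counting: if A(a) lies in the cover C, every clause falsified by a has a
   literal vertex in C outside A(a), giving |C| >= |O| + #falsified. *)
Lemma cover_card_falsified (C : {set red_vertex m}) a :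
  is_vertex_cover G C -> assignment_cover a \subset C ->
  #|{: occ m}| + #|falsified a| <= #|C|.
Proof.
move=> /forallP coverC subAC.
pose pick c := if lit_vertex (c, false) \in C then lit_vertex (c, false)
               else lit_vertex (c, true).
have pick_inj : injective pick.
  by apply: (can_inj (g := fun v : red_vertex m => v.1.1)) => c; rewrite /pick; case: ifP.
have pick_sub : pick @: falsified a \subset C :\: assignment_cover a.
  apply/subsetP => v /imsetP[c]; rewrite inE clause_sat_cover negb_or.
  case/andP=> not1 not2 ->; move/forallP: (coverC (lit_vertex (c, false))).
  move=> /(_ (lit_vertex (c, true))); rewrite clause_edge /=.
  by rewrite /pick !in_setD; case: ifP => [in1 _ | _ in2]; rewrite ?in1 ?in2 ?not1 ?not2.
rewrite -(cardsID (assignment_cover a) C) (setIidPr subAC) card_assignment_cover.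
by rewrite leq_add2l -(card_imset _ pick_inj) subset_leq_card.
Qed.

Lemma vertex_cover_sat (C : {set red_vertex m}) :
  is_vertex_cover G C ->
  exists D : {set 'I_m}, #|{: occ m}| + #|D| <= #|C| /\ sat_without Phi D.
Proof.
move=> coverC; pose a := cover_assignment C.
exists (falsified a); split.
  exact: cover_card_falsified (assignment_cover_sub coverC).
by exists a => c; rewrite inE negbK.
Qed.

End Reduction.

Theorem mainTheorem10 (nv m : nat) (Phi : 'I_m -> lit nv * lit nv) (k : nat) :
  (exists M : {set {set red_vertex m}}, is_perfect_matching (red_adj Phi) M) /\
  ((exists D : {set 'I_m}, #|D| <= k /\ sat_without Phi D) <->
   (exists C : {set red_vertex m},
      is_vertex_cover (red_adj Phi) C /\
      #|C| <= matching_number (red_adj Phi) + k)).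
Proof.
split; first by exists (pair_matching m); exact: pair_matching_perfect.
rewrite red_matching_number; split.
- case=> D [cardD satD]; have [C [coverC cardC]] := sat_vertex_cover satD.
  by exists C; split; last by rewrite (leq_trans cardC) // leq_add2l.
- case=> C [coverC cardC]; have [D [cardD satD]] := vertex_cover_sat coverC.
  by exists D; split; first by rewrite -(leq_add2l #|{: occ m}|) (leq_trans cardD cardC).
Qed.
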